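(* Let $D$ be a knot diagram and let $D'$ be the knot diagram obtained from $D$ by increasing the number of full twists in some twist region of $D$. Then $D$ is in straight position if and only if $D'$ is in straight position.
   Context: A knot diagram is in straight position if the knot can be decomposed into two sub-arcs such that each sub-arc never crosses itself (equivalently, there is an arc of the knot that passes through every crossing of the diagram without meeting itself at a crossing). A twist region of a diagram consists of a maximal collection of bigon regions arranged end to end; a single crossing adjacent to no bigons is also a twist region. Increasing the number of full twists of a twist region means adding an even number of alternating crossings to the twist region in such a way that no new crossings can be removed by Reidemeister type 2 moves. *)

From mathcomp Require Import all_boot.
Set Implicit Arguments. Unset Strict Implicit. Unset Printing Implicit Defensive.

(* A (decorated) 4-valent combinatorial map on a finite set of darts T.
   Each dart is a half-edge leaving a crossing.
   - dsig : rotation of darts counterclockwise around their crossing,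
   - dalp : the edge involution (the dart at the other end of the same edge),
   - dover d : whether the strand through dart d passes OVER at its crossing
               (the strand through d also contains dsig (dsig d)). *)
Record diagram (T : finType) := Diagram {
  dsig : T -> T;
  dalp : T -> T;
  dover : T -> bool }.

Section DiagramDefs.
Variables (T : finType) (D : diagram T).

(* face permutation: orbits are the regions (complementary faces);
   the corner between darts x and dsig x lies in the face of dsig x *)
Definition face (x : T) : T := dsig D (dalp D x).
(* going straight through the next crossing: traversal of the knot *)
Definition strand (x : T) : T := dsig D (dsig D (dalp D x)).
Definition vtx (x : T) : T := froot (dsig D) x.

(* D is a knot diagram: a connected 4-valent map of genus 0 (Euler formula
   V - E + F = 2 with E = 2V), with consistent crossing information, whose
   straight-ahead traversal has one component (two orbits: the two
   orientations). *)
Definition knot_diagram : Prop :=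
  (forall x, iter 4 (dsig D) x = x) /\
  (forall x, dsig D (dsig D x) != x) /\
  (forall x, dalp D (dalp D x) = x) /\
  (forall x, dalp D x != x) /\
  (forall x, dover D (dsig D x) = ~~ dover D x) /\
  (forall x y, connect [rel u v | (v == dsig D u) || (v == dalp D u)] x y) /\
  fcard face predT = (fcard (dsig D) predT + 2)%N /\
  fcard strand predT = 2%N.

(* Straight position: the knot can be cut (at two points interior to edges)
   into two sub-arcs, each passing through pairwise distinct crossings. *)
Definition straight : Prop :=
  exists x0 : T, exists k : nat,
    let n := order strand x0 in
    [/\ (k <= n)%N,
        uniq (map vtx (traject strand x0 k))
      & uniq (map vtx (traject strand (iter k strand x0) (n - k)))].

Definition bigon_corner (x : T) : bool := order face (dsig D x) == 2%N.

(* The axis of the corner pair {(a, sig a), (sig^2 a, sig^3 a)} at the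
   crossing of a is the axis of a twist region containing that crossing:
   one of these two corners is a bigon (the bigons of a twist region sit at
   opposite corners of each of its crossings), or the crossing is adjacent to
   no bigon at all (single-crossing twist region, either axis). *)
Definition twist_axis (a : T) : Prop :=
  bigon_corner a \/ bigon_corner (dsig D (dsig D a)) \/
  (forall x, fconnect (dsig D) a x -> ~~ bigon_corner x).

End DiagramDefs.

(* ---- Adding n = 2m crossings (m full twists) at the corner (a, dsig a). ----
   New crossings x_0,...,x_{n-1} are placed in a row next to the crossing c
   of a, the two edges leaving c through a and b := dsig a being twisted
   around each other.  Darts of a new crossing j : (j,0) up-right (toward c),
   (j,1) up-left, (j,2) down-left, (j,3) down-right (counterclockwise).
   Crossing information is chosen alternating along both strands (starting
   from c), i.e. the twist region is continued with the same handedness. *)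
Section Twist.
Variables (T : finType) (D : diagram T) (a : T) (m : nat).

Local Notation n := (m.*2).
Local Notation T' := (T + 'I_n * 'I_4)%type.
Local Notation b := (dsig D a).

Definition tw_first : option 'I_n := insub 0%N.
Definition tw_last : option 'I_n := insub n.-1.
Definition tw_next (j : 'I_n) : option 'I_n := insub (j.+1).
Definition tw_prev (j : 'I_n) : option 'I_n :=
  if (j : nat) == 0%N then None else insub (j.-1).

Definition q (k : nat) : 'I_4 := inord k.

Definition tw_sig (x : T') : T' :=
  match x with
  | inl y => inl (dsig D y)
  | inr (j, k) => inr (j, ordS k)
  end.

Definition tw_alp (x : T') : T' :=
  match x with
  | inl y =>
      if y == a then
        (if tw_first is Some j0 then inr (j0, q 0) else inl (dalp D y))
      else if y == b then
        (if tw_first is Some j0 then inr (j0, q 3) else inl (dalp D y))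
      else if dalp D y == a then
        (if tw_last is Some jl then inr (jl, q 1) else inl (dalp D y))
      else if dalp D y == b then
        (if tw_last is Some jl then inr (jl, q 2) else inl (dalp D y))
      else inl (dalp D y)
  | inr (j, k) =>
      match nat_of_ord k with
      | 0 => if tw_prev j is Some p then inr (p, q 1) else inl a
      | 1 => if tw_next j is Some p then inr (p, q 0)
             else if dalp D a == b then inr (j, q 2) else inl (dalp D a)
      | 2 => if tw_next j is Some p then inr (p, q 3)
             else if dalp D b == a then inr (j, q 1) else inl (dalp D b)
      | _ => if tw_prev j is Some p then inr (p, q 2) else inl b
      end
  end.

Definition tw_over (x : T') : bool :=
  match x with
  | inl y => dover D y
  | inr (j, k) => if odd k then dover D a else ~~ dover D a
  end.

Definition twist : diagram T' := Diagram tw_sig tw_alp tw_over.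

End Twist.

(* No new crossing of D' can be removed by a Reidemeister II move: every
   bigon region with two distinct vertices, one of which is a new crossing,
   is alternating (its bounding strands are not over at both ends). *)
Definition no_new_R2 (T : finType) (k : nat) (D' : diagram (T + 'I_k * 'I_4)%type)
  : Prop :=
  forall y, (if y is inr _ then true else false) ->
    order (face D') y == 2%N ->
    vtx D' y != vtx D' (dalp D' y) ->
    dover D' y != dover D' (dalp D' y).

From mathcomp Require Import all_boot zify.
Set Implicit Arguments. Unset Strict Implicit. Unset Printing Implicit Defensive.

(* Let c be the crossing of a.  The twist puts the new crossings on the edges
   of D at a and at b = sig a, each new crossing once on each edge.  Attach the
   new crossings on the edge at a (resp. b) to the passage of the knot through
   c along that edge, splitting the edge in the middle of the twist when the
   two edges are one loop.  Then the step of the traversal of D at an old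
   crossing y lifts to a stretch of the traversal of D' that meets no new
   crossing when y is not c, and every new crossing exactly once when y is c.
   An arc of D through distinct crossings passes c at most once, so it lifts to
   an arc of D' through distinct crossings.  Conversely, deleting the new
   crossings from an arc of D' through distinct crossings leaves an arc of D
   through distinct crossings. *)

Section Trajectory.
Variables (T : finType) (f : T -> T).

Lemma order_eq_of_count (P : pred T) x d : 0 < d -> iter d f x = x ->
  count P (traject f x d) = count P (orbit f x) -> 0 < count P (orbit f x) ->
  order f x = d.
Proof.
case: d => // d _ fx Ecount P_gt0.
have cyc : fcycle f (x :: traject f (f x) d).
  by rewrite /= -[X in rcons _ X]fx iterSr -trajectSr fpath_traject.
have [[|k] Ek] := fcycle_consEflatten cyc; rewrite -trajectS in Ek.
  by rewrite -(size_traject f x d.+1) Ek /= cats0 size_orbit.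
by move: Ecount; rewrite Ek /= !count_cat; lia.
Qed.

Lemma pmap_traject_mkseq (B : Type) (g : T -> option B) (h : nat -> B) x L :
  (forall i, i < L -> g (iter i f x) = Some (h i)) ->
  pmap g (traject f x L) = mkseq h L.
Proof.
elim: L => // L IH gh.
rewrite trajectSr mkseqS -!cats1 pmap_cat IH => [|i /ltnW/gh //].
by rewrite /= gh.
Qed.

Lemma pmap_traject_nil (B : Type) (g : T -> option B) x L :
  (forall i, i < L -> g (iter i f x) = None) -> pmap g (traject f x L) = [::].
Proof.
elim: L => // L IH gN.
by rewrite trajectSr -cats1 pmap_cat IH => [|i /ltnW/gN //]; rewrite /= gN.
Qed.

End Trajectory.

Lemma uniq_map_coarsen (A B C : eqType) (g : A -> B) (h : A -> C) s :
  {in s &, forall x y, g x = g y -> h x = h y} -> uniq (map h s) -> uniq (map g s).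
Proof.
elim: s => //= x s IH gh /andP[hx_s hs]; apply/andP; split; last first.
  by apply: IH => // u v us vs; apply: gh; rewrite inE ?us ?vs orbT.
apply: contra hx_s => /mapP[y ys /gh Exy]; apply/mapP; exists y => //.
by apply: Exy; rewrite inE ?eqxx ?ys ?orbT.
Qed.

Lemma eq_vtx (T : finType) (D : diagram T) : injective (dsig D) ->
  forall x y, (vtx D x == vtx D y) = fconnect (dsig D) x y.
Proof. by move=> sig_inj x y; rewrite /vtx root_connect //; apply: fconnect_sym. Qed.

Section Twist.
Variables (T : finType) (D : diagram T) (a : T) (m : nat).
Hypothesis m_gt0 : 0 < m.
Hypothesis sig4 : forall x, iter 4 (dsig D) x = x.
Hypothesis sig2 : forall x, dsig D (dsig D x) != x.
Hypothesis alpK : forall x, dalp D (dalp D x) = x.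
Hypothesis alpN : forall x, dalp D x != x.

Local Notation n := m.*2.
Local Notation T' := (T + 'I_n * 'I_4)%type.
Local Notation D' := (twist D a m).
Local Notation sig := (dsig D).
Local Notation alp := (dalp D).
Local Notation s' := (strand D').
Local Notation b := (sig a).

Lemma n_gt0 : 0 < n. Proof. by rewrite double_gt0. Qed.

Lemma odd_n1 : odd n.-1.
Proof. by case: m m_gt0 => // m' _; rewrite doubleS /= odd_double. Qed.

Lemma qK k : k < 4 -> nat_of_ord (q k) = k.
Proof. exact: inordK. Qed.

Lemma tw_firstE : exists2 j, tw_first m = Some j & val j = 0.
Proof. by rewrite /tw_first; case: insubP => [j _ vj|]; [exists j | rewrite n_gt0]. Qed.

Lemma tw_lastE : exists2 j, tw_last m = Some j & val j = n.-1.
Proof. by rewrite /tw_last; case: insubP => [j _ vj|]; [exists j | rewrite ltn_predL n_gt0]. Qed.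

Lemma sig_inj : injective sig.
Proof. by apply: (can_inj (g := fun x => sig (sig (sig x)))) => x; apply: sig4. Qed.

Lemma sig_neq x : sig x != x.
Proof. by apply: contra (sig2 x) => /eqP E; rewrite !E. Qed.

Lemma sig3_neq x : sig (sig (sig x)) != x.
Proof. by apply: contra (sig_neq x) => /eqP E; rewrite -[X in _ == X](sig4 x) /= E. Qed.

Lemma a_neq_b : a != b. Proof. by rewrite eq_sym sig_neq. Qed.

Lemma strand_inj : injective (strand D).
Proof. by move=> x y /sig_inj/sig_inj/(congr1 alp); rewrite !alpK. Qed.

Lemma vtx_sig x : vtx D (sig x) = vtx D x.
Proof. by apply/esym/eqP; rewrite (eq_vtx sig_inj) fconnect1. Qed.

Lemma ab_notin_sig2 u : u \in [:: a; b] -> u \notin [:: sig (sig a); sig (sig b)].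
Proof.
move=> /[!inE] /orP[]/eqP->; rewrite ?(inj_eq sig_inj) ?(eq_sym a) negb_or.
  by rewrite sig2 sig3_neq.
by rewrite sig_neq sig2.
Qed.

Lemma sig2_notin_ab u : u \in [:: a; b] -> sig (sig u) \notin [:: a; b].
Proof.
move=> /[!inE] /orP[]/eqP->; rewrite ?(inj_eq sig_inj) negb_or.
  by rewrite sig2 sig_neq.
by rewrite sig3_neq sig2.
Qed.

Definition new_pos (z : T') : option (nat * nat) :=
  if z is inr (j, k) then Some (val j, val k) else None.

Definition new_index (z : T') : option nat :=
  if z is inr (j, _) then Some (val j) else None.

Definition old_dart (z : T') : option T := if z is inl x then Some x else None.

Lemma new_pos_inj z1 z2 : new_pos z1 = new_pos z2 -> new_pos z1 != None -> z1 = z2.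
Proof.
case: z1 z2 => [//|[j k]] [//|[j' k']] [/val_inj-> /val_inj->] //.
Qed.

Lemma new_pos_index z j k : new_pos z = Some (j, k) -> new_index z = Some j.
Proof. by case: z => [//|[? ?] [<-]]. Qed.

Lemma new_index_old z j : new_index z = Some j -> old_dart z = None.
Proof. by case: z. Qed.

(* The branch [inl a] is junk: [tw_last m] is never [None] since n > 0. *)
Definition top_dart (k : nat) : T' :=
  if tw_last m is Some l then inr (l, q k) else inl a.

(* Where the lift of the step of D at y starts: at the old dart y, except that
   for the two darts leaving c opposite to a and b it starts at the far end of
   the twist, so that the new crossings met on the way into c are attached to
   that passage through c. *)
Definition entry (y : T) : T' :=
  if y == sig (sig a) then top_dart 3
  else if y == sig (sig b) then top_dart 0 else inl y.

Lemma new_pos_top k : k < 4 -> new_pos (top_dart k) = Some (n.-1, k).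
Proof. by move=> k4; have [l El vl] := tw_lastE; rewrite /top_dart El /= vl qK. Qed.

Lemma entry_sig2a : new_pos (entry (sig (sig a))) = Some (n.-1, 3).
Proof. by rewrite /entry eqxx new_pos_top. Qed.

Lemma entry_sig2b : new_pos (entry (sig (sig b))) = Some (n.-1, 0).
Proof. by rewrite /entry !(inj_eq sig_inj) (negbTE (sig_neq _)) eqxx new_pos_top. Qed.

Lemma entry_old y : y \notin [:: sig (sig a); sig (sig b)] -> entry y = inl y.
Proof. by rewrite !inE negb_or /entry => /andP[/negbTE-> /negbTE->]. Qed.

Lemma entry_sig2 x : x \notin [:: a; b] -> entry (sig (sig x)) = inl (sig (sig x)).
Proof. by rewrite !inE => xab; rewrite entry_old // !inE !(inj_eq sig_inj). Qed.

Lemma strand_inl_a : new_pos (s' (inl a)) = Some (0, 2).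
Proof. by have [j Ej vj] := tw_firstE; rewrite /strand /= eqxx Ej /= vj qK. Qed.

Lemma strand_inl_b : new_pos (s' (inl b)) = Some (0, 1).
Proof.
have [j Ej vj] := tw_firstE.
by rewrite /strand /= eq_sym (negbTE a_neq_b) eqxx Ej /= vj qK.
Qed.

Lemma strand_inl y : y \notin [:: a; b] -> s' (inl y) = entry (strand D y).
Proof.
rewrite !inE negb_or => /andP[ya yb]; have [l El vl] := tw_lastE.
rewrite /strand /= (negbTE ya) (negbTE yb) El.
have [-> | alp_ya] := eqVneq (alp y) a.
  by apply: new_pos_inj => //=; rewrite entry_sig2a vl qK.
have [-> | alp_yb] := eqVneq (alp y) b.
  by apply: new_pos_inj => //=; rewrite entry_sig2b vl qK.
by rewrite entry_sig2 // !inE negb_or alp_ya.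
Qed.

Lemma strand_up z j k : new_pos z = Some (j, k) -> k \in [:: 1; 2] -> j.+1 < n ->
  new_pos (s' z) = Some (j.+1, 3 - k).
Proof.
case: z => [//|[jj [kk kk4]]] [<- <-] /[!inE] /orP[]/eqP Ek jn; subst kk;
  rewrite /strand /= /tw_next; by case: insubP => [u _ vu|]; rewrite ?jn //= vu qK.
Qed.

Lemma strand_down z j k : new_pos z = Some (j, k) -> k \in [:: 0; 3] -> 0 < j ->
  new_pos (s' z) = Some (j.-1, 3 - k).
Proof.
case: z => [//|[jj [kk kk4]]] [<- <-] /[!inE] /orP[]/eqP Ek j_gt0; subst kk;
  rewrite /strand /= /tw_prev (negbTE (lt0n_neq0 j_gt0));
  case: insubP => [u _ vu|/negP[]]; rewrite /= ?vu ?qK //;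
  exact: leq_ltn_trans (leq_pred _) (ltn_ord jj).
Qed.

Lemma strand_top_a z : new_pos z = Some (n.-1, 1) -> s' z = entry (strand D a).
Proof.
case: z => [//|[j [k k4]]] [vj Ek]; subst k.
rewrite /strand /= /tw_next insubF ?vj ?prednK ?n_gt0 ?ltnn //.
have [E | alp_ab] := eqVneq (alp a) b.
  by apply: new_pos_inj => //=; rewrite E entry_sig2b vj qK.
by rewrite entry_sig2 // !inE negb_or alpN.
Qed.

Lemma strand_top_b z : new_pos z = Some (n.-1, 2) -> s' z = entry (strand D b).
Proof.
case: z => [//|[j [k k4]]] [vj Ek]; subst k.
rewrite /strand /= /tw_next insubF ?vj ?prednK ?n_gt0 ?ltnn //.
have [E | alp_ba] := eqVneq (alp b) a.
  by apply: new_pos_inj => //=; rewrite E entry_sig2a vj qK.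
by rewrite entry_sig2 // !inE negb_or alp_ba alpN.
Qed.

Lemma strand_bottom_a z : new_pos z = Some (0, 0) -> s' z = inl (sig (sig a)).
Proof. by case: z => [//|[jj [kk kk4]]] [Ej Ek]; subst kk; rewrite /strand /= /tw_prev Ej. Qed.

Lemma strand_bottom_b z : new_pos z = Some (0, 3) -> s' z = inl (sig (sig b)).
Proof. by case: z => [//|[jj [kk kk4]]] [Ej Ek]; subst kk; rewrite /strand /= /tw_prev Ej. Qed.

Lemma iter_strand_up z j k i : new_pos z = Some (j, k) -> k \in [:: 1; 2] -> j + i < n ->
  new_pos (iter i s' z) = Some (j + i, if odd i then 3 - k else k).
Proof.
move=> Pz /[!inE] /orP[]/eqP Ek; subst k; elim: i => [|i IH]; rewrite ?addn0 // addnS => lt;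
  by rewrite iterS /=; case: (odd i) (IH (ltnW lt)) => /strand_up ->.
Qed.

Lemma iter_strand_down z j k i : new_pos z = Some (j, k) -> k \in [:: 0; 3] -> i <= j ->
  new_pos (iter i s' z) = Some (j - i, if odd i then 3 - k else k).
Proof.
move=> Pz /[!inE] /orP[]/eqP Ek; subst k; elim: i => [|i IH]; rewrite ?subn0 // => lt;
  rewrite iterS /= subnS;
  by case: (odd i) (IH (ltnW lt)) => /strand_down ->; rewrite ?subn_gt0.
Qed.

Lemma iter_n_strand z : iter n s' z = s' (iter n.-1 s' z).
Proof. by rewrite -iterS prednK // n_gt0. Qed.

Lemma strand_up_pass u : u \in [:: a; b] ->
  iter n s' (s' (inl u)) = entry (strand D u) /\
  forall i, i < n -> new_index (iter i s' (s' (inl u))) = Some i.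
Proof.
have top_lt : 0 + n.-1 < n by rewrite ltn_predL n_gt0.
move=> /[!inE] /orP[]/eqP->; split=> [|i i_lt].
- by rewrite iter_n_strand strand_top_a // (iter_strand_up (i := n.-1) strand_inl_a) ?odd_n1.
- by rewrite (new_pos_index (iter_strand_up strand_inl_a _ _)).
- by rewrite iter_n_strand strand_top_b // (iter_strand_up (i := n.-1) strand_inl_b) ?odd_n1.
- by rewrite (new_pos_index (iter_strand_up strand_inl_b _ _)).
Qed.

Lemma strand_down_pass u : u \in [:: a; b] ->
  iter n s' (entry (sig (sig u))) = inl (sig (sig u)) /\
  forall i, i < n -> new_index (iter i s' (entry (sig (sig u)))) = Some (n.-1 - i).
Proof.
move=> /[!inE] /orP[]/eqP->; split=> [|i i_lt].
- rewrite iter_n_strand strand_bottom_a //.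
  by rewrite (iter_strand_down (i := n.-1) entry_sig2a) ?odd_n1 ?subnn.
- by rewrite (new_pos_index (iter_strand_down entry_sig2a _ _)) // -ltnS prednK ?n_gt0.
- rewrite iter_n_strand strand_bottom_b //.
  by rewrite (iter_strand_down (i := n.-1) entry_sig2b) ?odd_n1 ?subnn.
- by rewrite (new_pos_index (iter_strand_down entry_sig2b _ _)) // -ltnS prednK ?n_gt0.
Qed.

Definition lift_step (y : T) (d : nat) : Prop :=
  [/\ iter d s' (entry y) = entry (strand D y),
      pmap old_dart (traject s' (entry y) d) = [:: y],
      vtx D y != vtx D a -> pmap new_index (traject s' (entry y) d) = [::] &
      uniq (pmap new_index (traject s' (entry y) d))].

Lemma lift_step_ab u : u \in [:: a; b] -> lift_step u n.+1.
Proof.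
move=> uab; have [En Ei] := strand_up_pass uab.
have Ni i : i < n -> old_dart (iter i s' (s' (inl u))) = None by move/Ei/new_index_old.
rewrite /lift_step entry_old ?ab_notin_sig2 // iterSr En trajectS /=.
rewrite (pmap_traject_nil Ni) (pmap_traject_mkseq (h := id) Ei) mkseq_uniq //.
split=> //; by move: uab => /[!inE] /orP[]/eqP->; rewrite ?vtx_sig eqxx.
Qed.

Lemma lift_step_sig2 u : u \in [:: a; b] -> lift_step (sig (sig u)) n.+1.
Proof.
move=> uab; have [En Ei] := strand_down_pass uab.
have Ni i : i < n -> old_dart (iter i s' (entry (sig (sig u)))) = None.
  by move/Ei/new_index_old.
rewrite /lift_step iterS En -strand_inl ?sig2_notin_ab // trajectSr En -cats1 !pmap_cat.
rewrite (pmap_traject_nil Ni) (pmap_traject_mkseq Ei) cats0 !vtx_sig.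
split=> //; first by move: uab => /[!inE] /orP[]/eqP->; rewrite ?vtx_sig eqxx.
by apply/mkseq_uniqP => i j /[!inE] i_lt j_lt; lia.
Qed.

Lemma lift_step_far y : y \notin [:: a; b; sig (sig a); sig (sig b)] -> lift_step y 1.
Proof.
move=> /[!inE] /norP[ya /norP[yb /norP[y2a y2b]]].
rewrite /lift_step entry_old; last by rewrite !inE negb_or y2a.
by split=> //; apply: strand_inl; rewrite !inE negb_or ya.
Qed.

Lemma exists_lift_step y : exists d, lift_step y d.
Proof.
have [yab | yab] := boolP (y \in [:: a; b]); first by exists n.+1; apply: lift_step_ab.
have [/[!inE] /orP[]/eqP-> | y2] := boolP (y \in [:: sig (sig a); sig (sig b)]).
- by exists n.+1; apply: lift_step_sig2; rewrite !inE eqxx.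
- by exists n.+1; apply: lift_step_sig2; rewrite !inE eqxx orbT.
by exists 1; apply: lift_step_far; rewrite -[[:: a, b & _]]/([:: a; b] ++ _) mem_cat negb_or yab.
Qed.

Lemma lift_path L y : exists d,
  let p := traject s' (entry y) d in let py := traject (strand D) y L in
  [/\ iter d s' (entry y) = entry (iter L (strand D) y),
      pmap old_dart p = py,
      vtx D a \notin map (vtx D) py -> pmap new_index p = [::] &
      uniq (map (vtx D) py) -> uniq (pmap new_index p)].
Proof.
elim: L y => [|L IH] y; first by exists 0.
have [d1 [E1 O1 N1 U1]] := exists_lift_step y.
have [d2 [E2 O2 N2 U2]] := IH (strand D y).
exists (d1 + d2); rewrite /= trajectD E1 !pmap_cat O1 O2 inE negb_or eq_sym.
split=> [||/andP[/N1-> /N2->] //|/andP[y_rest /U2 U_rest]].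
- by rewrite addnC iterD E1 E2 -iterSr.
- by [].
have [ya | ya] := eqVneq (vtx D y) (vtx D a); last by rewrite N1.
by rewrite N2 ?cats0 // -ya.
Qed.

Definition next_old (z : T') (y : T) : Prop :=
  exists i, iter i s' z = inl y /\ pmap old_dart (traject s' z i) = [::].

Lemma next_old_inl w y : next_old (inl w) y -> y = w.
Proof. by case=> -[[]|i] [] //; rewrite trajectS. Qed.

Lemma next_old_step z y : old_dart z = None -> next_old z y -> next_old (s' z) y.
Proof.
move=> z_new [[|i] [Ei Pi]]; first by move: z_new; rewrite -[z]/(iter 0 s' z) Ei.
by exists i; move: Ei Pi; rewrite iterSr trajectS /= z_new.
Qed.

Lemma next_old_trans z i y : pmap old_dart (traject s' z i) = [::] ->
  next_old (iter i s' z) y -> next_old z y.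
Proof.
move=> Pi [j [Ej Pj]]; exists (i + j).
by rewrite trajectD pmap_cat Pi Pj addnC iterD Ej.
Qed.

Lemma next_old_entry y : next_old (entry y) y.
Proof.
have [y2 | y2] := boolP (y \in [:: sig (sig a); sig (sig b)]); last first.
  by rewrite entry_old //; exists 0.
have [u uab ->] : exists2 u, u \in [:: a; b] & y = sig (sig u).
  by move: y2 => /[!inE] /orP[]/eqP->; [exists a | exists b]; rewrite ?inE ?eqxx ?orbT.
have [En Ei] := strand_down_pass uab; exists n; split=> //.
by apply: pmap_traject_nil => i /Ei/new_index_old.
Qed.

Lemma next_old_strand w : next_old (s' (inl w)) (strand D w).
Proof.
have [wab | wab] := boolP (w \in [:: a; b]); last by rewrite strand_inl //; apply: next_old_entry.
have [En Ei] := strand_up_pass wab; apply: (next_old_trans (i := n)).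
  by apply: pmap_traject_nil => i /Ei/new_index_old.
by rewrite En; apply: next_old_entry.
Qed.

(* Decreases along the traversal of D' between old darts: it climbs the twist
   on the darts 1 and 2 of the new crossings and descends it on 0 and 3. *)
Definition height (z : T') : nat :=
  if new_pos z is Some (j, k) then (if k \in [:: 1; 2] then n + n - j else j) else 0.

Lemma height_entry y : old_dart (entry y) = None -> height (entry y) = n.-1.
Proof.
by rewrite /entry; case: ifP => _; [|case: ifP => // _]; rewrite /height new_pos_top.
Qed.

Lemma height_strand z : old_dart z = None -> old_dart (s' z) = None -> height (s' z) < height z.
Proof.
move=> znew snew; case Pz: (new_pos z) => [[j k]|]; last first.
  by clear snew; case: z znew Pz => [? //|[? ?]].
have [jn k4] : j < n /\ k < 4 by clear znew snew; case: z Pz => // -[j' k'] [<- <-].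
rewrite [height z]/height Pz; case: k k4 Pz => [|[|[|[|//]]]] _ Pz.
- have [j0 | j_gt0] := posnP j; last by rewrite /height (strand_down Pz) //=; lia.
  by rewrite j0 in Pz; rewrite (strand_bottom_a Pz) in snew.
- have [j_lt | j_ge] := ltnP j.+1 n; first by rewrite /height (strand_up Pz) //=; lia.
  have Pz' : new_pos z = Some (n.-1, 1) by rewrite Pz; congr (Some (_, _)); lia.
  by rewrite (strand_top_a Pz') in snew *; rewrite height_entry //=; lia.
- have [j_lt | j_ge] := ltnP j.+1 n; first by rewrite /height (strand_up Pz) //=; lia.
  have Pz' : new_pos z = Some (n.-1, 2) by rewrite Pz; congr (Some (_, _)); lia.
  by rewrite (strand_top_b Pz') in snew *; rewrite height_entry //=; lia.
- have [j0 | j_gt0] := posnP j; last by rewrite /height (strand_down Pz) //=; lia.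
  by rewrite j0 in Pz; rewrite (strand_bottom_b Pz) in snew.
Qed.

Lemma next_old_exists z : exists y, next_old z y.
Proof.
suff: forall h z, height z < h -> exists y, next_old z y by apply; apply: ltnSn.
elim=> [//|h IH] {}z z_h; case: z z_h => [w _|p z_h]; first by exists w, 0.
case E: (s' (inr p)) => [y|p']; first by exists y, 1; split=> //; exact: E.
have [|y Ry] := IH (inr p'); last first.
  by exists y; apply: (next_old_trans (i := 1)) => //; rewrite -[iter 1 _ _]/(s' (inr p)) E.
by rewrite ltnS in z_h; rewrite -E (leq_trans (height_strand _ _) z_h) // E.
Qed.

Lemma pmap_old_traject z y L : next_old z y ->
  exists c, pmap old_dart (traject s' z L) = traject (strand D) y c.
Proof.
elim: L z y => [|L IH] z y Rzy; first by exists 0.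
rewrite trajectS; case: z Rzy => [w /next_old_inl-> | p /(@next_old_step (inr p) y erefl) Ry].
  by have [c Ec] := IH _ _ (next_old_strand w); exists c.+1; rewrite trajectS -Ec.
exact: IH.
Qed.

Lemma fconnect_old_iter w i : fconnect s' (inl w) (inl (iter i (strand D) w)).
Proof.
elim: i => [|i IH]; first exact: connect0.
apply: connect_trans IH _; have [j [Ej _]] := next_old_strand (iter i (strand D) w).
by rewrite iterS -Ej -iterSr fconnect_iter.
Qed.

Lemma pmap_old_orbit z y : next_old z y ->
  pmap old_dart (orbit s' z) = orbit (strand D) y.
Proof.
move=> Rzy; have [c Ec] := pmap_old_traject (order s' z) Rzy.
rewrite /orbit in Ec *; rewrite Ec; congr traject; apply/eqP; rewrite eqn_leq.
have U : uniq (traject (strand D) y c).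
  by rewrite -Ec (pmap_uniq (g := inl)) ?orbit_uniq //; case.
apply/andP; split.
  rewrite -[c](size_traject (strand D) y) -size_orbit; apply: uniq_leq_size U _.
  by move=> u /trajectP[i _ ->]; rewrite -fconnect_orbit fconnect_iter.
rewrite -size_orbit -[X in _ <= X](size_traject (strand D) y c).
apply: uniq_leq_size (orbit_uniq _ _) _ => u /trajectP[i _ ->].
rewrite -Ec mem_pmap -/(orbit s' z); apply/mapP; exists (inl (iter i (strand D) y)) => //.
have [j [Ej _]] := Rzy; rewrite -fconnect_orbit.
by apply: connect_trans (fconnect_old_iter y i); rewrite -Ej fconnect_iter.
Qed.

Lemma twist_sig_inj : injective (dsig D').
Proof.
move=> [x|[j k]] [y|[j' k']] // [] => [/sig_inj-> // | -> /eqP].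
by rewrite -[k.+1]addn1 -[k'.+1]addn1 eqn_modDr !modn_small // => /eqP/val_inj->.
Qed.

Lemma iter_twist_sig_inl i x : iter i (dsig D') (inl x) = inl (iter i sig x).
Proof. by elim: i => //= i ->. Qed.

Lemma iter_twist_sig_inr i j k : iter i (dsig D') (inr (j, k)) = inr (j, iter i (@ordS 4) k).
Proof. by elim: i => //= i ->. Qed.

Lemma vtx_twist_inl x y : (vtx D' (inl x) == vtx D' (inl y)) = (vtx D x == vtx D y).
Proof.
rewrite (eq_vtx twist_sig_inj) (eq_vtx sig_inj); apply/idP/idP => /iter_findex.
  by rewrite iter_twist_sig_inl => -[<-]; apply: fconnect_iter.
by move=> <-; rewrite -iter_twist_sig_inl; apply: fconnect_iter.
Qed.

Definition vtx_label (z : T') : T + nat :=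
  match z with inl x => inl (vtx D x) | inr (j, _) => inr (val j) end.

Lemma vtx_label_twist u v : vtx D' u = vtx D' v -> vtx_label u = vtx_label v.
Proof.
move/eqP; rewrite (eq_vtx twist_sig_inj) => /iter_findex.
case: u v => [x|[j k]] [y|[j' k']]; rewrite ?iter_twist_sig_inl ?iter_twist_sig_inr // => -[<-] //.
by congr inl; apply/eqP; rewrite (eq_vtx sig_inj) fconnect_iter.
Qed.

Lemma uniq_vtx_twist s : uniq (map (vtx D) (pmap old_dart s)) -> uniq (pmap new_index s) ->
  uniq (map (vtx D') s).
Proof.
move=> Uold Unew; apply: (uniq_map_coarsen (h := vtx_label)) => [u v _ _|].
  exact: vtx_label_twist.
have /perm_uniq-> : perm_eq (map vtx_label s)
    (map inl (map (vtx D) (pmap old_dart s)) ++ map inr (pmap new_index s)).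
  elim: s {Uold Unew} => //= -[x|[j k]] s IH /=; first by rewrite perm_cons.
  by rewrite perm_sym (perm_catCA _ [:: inr (val j)]) /= perm_cons perm_sym.
rewrite cat_uniq !(map_inj_uniq inl_inj, map_inj_uniq inr_inj) Uold Unew /= andbT.
by apply/hasPn => _ /mapP[j _ ->]; apply/mapP => -[x].
Qed.

Lemma uniq_vtx_old s : uniq (map (vtx D') s) -> uniq (map (vtx D) (pmap old_dart s)).
Proof.
move=> U; apply: (uniq_map_coarsen (h := fun x => vtx D' (inl x))).
  by move=> x y _ _ /eqP; rewrite -vtx_twist_inl => /eqP.
rewrite (map_comp (vtx D') inl) (pmap_filter (g := inl)); last by case.
exact: subseq_uniq (map_subseq _ (filter_subseq _ _)) U.
Qed.

Lemma straight_twist : straight D -> straight D'.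
Proof.
case=> x0 [k /= [k_le U1 U2]]; set N := order (strand D) x0 in k_le U2 *.
have [d1 [E1 O1 _ V1]] := lift_path k x0.
have [d2 [E2 O2 _ V2]] := lift_path (N - k) (iter k (strand D) x0).
set z := entry x0 in E1 O1 V1 *.
have Ez : iter (d1 + d2) s' z = z.
  by rewrite addnC iterD E1 E2 -iterD subnK // iter_order //; apply: strand_inj.
have Oz : pmap old_dart (traject s' z (d1 + d2)) = orbit (strand D) x0.
  by rewrite trajectD pmap_cat O1 E1 O2 -trajectD subnKC.
have Pz : 0 < count [eta old_dart] (orbit s' z).
  by rewrite -size_pmap (pmap_old_orbit (next_old_entry x0)) size_orbit order_gt0.
have ord_z : order s' z = d1 + d2.
  apply: (order_eq_of_count _ Ez _ Pz); last first.
    by rewrite -!size_pmap Oz (pmap_old_orbit (next_old_entry x0)).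
  case: (d1 + d2) Oz => // /(congr1 size); rewrite size_orbit => N0.
  by move: (order_gt0 (strand D) x0); rewrite -N0.
exists z, d1; rewrite /= ord_z addKn E1; split; first exact: leq_addr.
- by apply: uniq_vtx_twist; rewrite ?O1 // V1.
- by apply: uniq_vtx_twist; rewrite ?O2 // V2.
Qed.

Lemma straight_untwist : straight D' -> straight D.
Proof.
case=> z [k /= [k_le U1 U2]]; set L := order s' z in k_le U2 *.
have [y Rzy] := next_old_exists z.
have [c O1] := pmap_old_traject k Rzy.
have Oz := pmap_old_orbit Rzy.
have Eorb : orbit s' z = traject s' z k ++ traject s' (iter k s' z) (L - k).
  by rewrite -trajectD subnKC.
have c_le : c <= order (strand D) y.
  by move: (congr1 size Oz); rewrite Eorb pmap_cat size_cat O1 !size_traject => <-; apply: leq_addr.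
have O2 : pmap old_dart (traject s' (iter k s' z) (L - k)) =
          traject (strand D) (iter c (strand D) y) (order (strand D) y - c).
  move: Oz; rewrite Eorb pmap_cat O1 {1}/orbit -{1}(subnKC c_le) trajectD.
  by move/(congr1 (drop c)); rewrite !drop_size_cat ?size_traject.
exists y, c; split=> //.
- by rewrite -O1; apply: uniq_vtx_old.
- by rewrite -O2; apply: uniq_vtx_old.
Qed.

End Twist.

Theorem lemma4p3 (T : finType) (D : diagram T) (a : T) (m : nat) :
  knot_diagram D ->
  (0 < m)%N ->
  twist_axis D a ->
  no_new_R2 (twist D a m) ->
  straight D <-> straight (twist D a m).
Proof.
move=> [sig4 [sig2 [alpK [alpN _]]]] m_gt0 _ _.
split; [exact: straight_twist | exact: straight_untwist].
Qed.
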